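(* Let $D^p$ be an instance of a PDB schema $\mathcal{D}^p$ that is consistent w.r.t. a set $\mathcal{IC}$ of denial constraints, let $T$ be a set of tuples of $D^p$, and let $H=HG(D^p,\mathcal{IC})$. If either (i) the tuples in $T$ are pairwise disconnected in $H$, or (ii) $Int(T,H)$ is a matryoshka, then $p^{\min}(T)=\max\{0,\sum_{t\in T}p(t)-|T|+1\}$. Otherwise, $\max\{0,\sum_{t\in T}p(t)-|T|+1\}$ is a lower bound for $p^{\min}(T)$.
   Context: A PDB instance $D^p$ is a finite set of tuples, each with a probability $p(t)\in[0,1]$. Possible worlds are subsets of its tuples; an interpretation is a probability distribution $Pr$ on the possible worlds with $\sum_{w\ni t}Pr(w)=p(t)$ for each tuple $t$. Denial constraints are formulas $\forall\vec x.\neg[R_1(\vec x_1)\wedge\dots\wedge R_m(\vec x_m)\wedge\phi]$ with $\phi$ a conjunction of comparisons ($=,\neq,\le,\ge,<,>$) among variables/constants. A model w.r.t. $\mathcal{IC}$ is an interpretation giving probability $0$ to every world violating a constraint of $\mathcal{IC}$; $D^p$ is consistent if a model exists. A conflicting set is a minimal set of tuples such that every world containing it violates $\mathcal{IC}$; the conflict hypergraph $HG(D^p,\mathcal{IC})$ has the tuples as nodes and the conflicting sets as hyperedges. $p^{\min}(T)=\min_{Pr \text{ model}}\sum_{w\supseteq T}Pr(w)$. Two nodes are disconnected if no path (sequence of distinct hyperedges, consecutive ones intersecting, the first containing one node and the last the other) joins them. $Int(T,H)$ denotes the set of intersections of $T$ with the hyperedges of $H$. A set of sets is a matryoshka if it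 is totally ordered by strict inclusion. *)

From HB Require Import structures.
From mathcomp Require Import all_boot all_order all_algebra.
From mathcomp Require Import reals.
Set Implicit Arguments. Unset Strict Implicit. Unset Printing Implicit Defensive.
Import Order.TTheory GRing.Theory Num.Theory.
Local Open Scope ring_scope.

Definition AllIn (A : Type) (P : A -> Prop) (s : seq A) : Prop :=
  foldr (fun x acc => P x /\ acc) True s.
Definition ExIn (A : Type) (P : A -> Prop) (s : seq A) : Prop :=
  foldr (fun x acc => P x \/ acc) False s.

Section Syntax.
Variables (disp : Order.disp_t) (V : orderType disp) (Rel : eqType).

Inductive term := TVar of nat | TConst of V.
Inductive cmp_op := CEq | CNeq | CLe | CGe | CLt | CGt.
Record comparison := Cmp { c_op : cmp_op; c_lhs : term; c_rhs : term }.
Record atom := Atom { a_rel : Rel; a_args : seq term }.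
(* forall x. ~ [R_1(x_1) /\ ... /\ R_m(x_m) /\ phi], phi a conjunction of
   comparisons. *)
Record denial := Denial { dc_atoms : seq atom; dc_phi : seq comparison }.

Definition dbtuple := (Rel * seq V)%type.

Definition eval_term (s : nat -> V) (t : term) : V :=
  match t with TVar x => s x | TConst c => c end.

Definition eval_cmp (s : nat -> V) (c : comparison) : bool :=
  let a := eval_term s (c_lhs c) in
  let b := eval_term s (c_rhs c) in
  match c_op c with
  | CEq => a == b
  | CNeq => a != b
  | CLe => (a <= b)%O
  | CGe => (b <= a)%O
  | CLt => (a < b)%O
  | CGt => (b < a)%O
  end.

Definition wf_tuple (ar : Rel -> nat) (t : dbtuple) : Prop := size t.2 = ar t.1.
Definition wf_atom (ar : Rel -> nat) (A : atom) : Prop :=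
  size (a_args A) = ar (a_rel A).
Definition wf_denial (ar : Rel -> nat) (dc : denial) : Prop :=
  AllIn (wf_atom ar) (dc_atoms dc).

(* The tuples of the PDB instance are indexed by a finite type I, via an
   injective map tup : I -> dbtuple; a possible world is a subset of I. *)
Variables (I : finType) (tup : I -> dbtuple).

Definition violates_dc (w : {set I}) (dc : denial) : Prop :=
  exists s : nat -> V,
    AllIn (fun A => exists2 i, i \in w & tup i = (a_rel A, map (eval_term s) (a_args A)))
          (dc_atoms dc)
    /\ AllIn (fun c => eval_cmp s c) (dc_phi dc).

Definition violates (IC : seq denial) (w : {set I}) : Prop :=
  ExIn (violates_dc w) IC.

Definition all_supersets_violate (IC : seq denial) (S : {set I}) : Prop :=
  forall w : {set I}, S \subset w -> violates IC w.

Definition conflicting_set (IC : seq denial) (S : {set I}) : Prop :=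
  all_supersets_violate IC S /\
  forall S' : {set I}, S' \proper S -> ~ all_supersets_violate IC S'.

Definition hyperedge (IC : seq denial) (e : {set I}) : Prop := conflicting_set IC e.

Definition hg_connected (IC : seq denial) (t t' : I) : Prop :=
  exists (e1 : {set I}) (es : seq {set I}),
    [/\ uniq (e1 :: es),
        AllIn (hyperedge IC) (e1 :: es),
        path (fun A B : {set I} => ~~ [disjoint A & B]) e1 es,
        t \in e1 &
        t' \in last e1 es].

Definition hg_disconnected (IC : seq denial) (t t' : I) : Prop :=
  ~ hg_connected IC t t'.

Definition pairwise_disconnected (IC : seq denial) (T : {set I}) : Prop :=
  forall t t', t \in T -> t' \in T -> t != t' -> hg_disconnected IC t t'.

Definition in_Int (IC : seq denial) (T A : {set I}) : Prop :=
  exists2 e, hyperedge IC e & A = T :&: e.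

Definition matryoshka (F : {set I} -> Prop) : Prop :=
  forall A B, F A -> F B -> [\/ A = B, A \proper B | B \proper A].

Variables (R : realType) (p : I -> R).

Definition interpretation (Pr : {set I} -> R) : Prop :=
  [/\ forall w, 0 <= Pr w,
      \sum_(w : {set I}) Pr w = 1 &
      forall i, \sum_(w : {set I} | i \in w) Pr w = p i].

Definition model (IC : seq denial) (Pr : {set I} -> R) : Prop :=
  interpretation Pr /\ forall w, violates IC w -> Pr w = 0.

Definition pdb_consistent (IC : seq denial) : Prop := exists Pr, model IC Pr.

Definition prob_all (Pr : {set I} -> R) (T : {set I}) : R :=
  \sum_(w : {set I} | T \subset w) Pr w.

Definition is_pmin (IC : seq denial) (T : {set I}) (v : R) : Prop :=
  (exists2 Pr, model IC Pr & prob_all Pr T = v) /\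
  (forall Pr, model IC Pr -> v <= prob_all Pr T).

Definition pmin_lower_bound (IC : seq denial) (T : {set I}) (v : R) : Prop :=
  forall Pr, model IC Pr -> v <= prob_all Pr T.

Definition frechet_bound (T : {set I}) : R :=
  Num.max 0 (\sum_(t in T) p t - #|T|%:R + 1).

End Syntax.

From HB Require Import structures.
From mathcomp Require Import all_boot all_order all_algebra.
From mathcomp Require Import reals boolp.
From mathcomp Require Import lra ring zify.
Import Order.TTheory GRing.Theory Num.Theory.
Set Implicit Arguments. Unset Strict Implicit. Unset Printing Implicit Defensive.

(* The lower bound is the Bonferroni inequality P(A /\ B) >= P(A) + P(B) - 1,
   applied once per tuple of T.  For equality, peel one tuple t off T at a time:
   starting from a model that attains the bound for T \ {t}, move probability
   mass from pairs of worlds (one containing all of T, one containing neither t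
   nor all of T \ {t}) to pairs with the same tuples in total, one containing
   T \ {t} but not t and one containing t but not T \ {t}.  Moving
   min(P(both), P(neither)) makes the two events as disjoint as possible while
   keeping the marginals.  Consistency survives the move: for pairwise
   disconnected T swap the two worlds on the connected component of t, which
   is a union of hyperedges; for a matryoshka choose t such that every
   hyperedge containing t contains T, and move t from the first world to the
   second. *)

Lemma AllInP (A : eqType) (P : A -> Prop) (s : seq A) :
  AllIn P s <-> (forall x, x \in s -> P x).
Proof.
elim: s => [|x s IH] /=; first by split => // _ y; rewrite in_nil.
split=> [[Px /IH H] y|H].
- by rewrite in_cons => /orP [/eqP -> //|]; apply: H.
- split; first by apply: H; rewrite mem_head.
  by apply/IH => y ys; apply: H; rewrite in_cons ys orbT.
Qed.

Lemma AllIn_mono (A : Type) (P Q : A -> Prop) (s : seq A) :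
  (forall x, P x -> Q x) -> AllIn P s -> AllIn Q s.
Proof. by move=> PQ; elim: s => [|x s IH] //= [/PQ ? /IH ?]. Qed.

Lemma ExIn_mono (A : Type) (P Q : A -> Prop) (s : seq A) :
  (forall x, P x -> Q x) -> ExIn P s -> ExIn Q s.
Proof. by move=> PQ; elim: s => [|x s IH] //= [/PQ ?|/IH ?]; [left|right]. Qed.

Lemma setD1_ind (I : finType) (P : {set I} -> Prop) :
  (forall T : {set I}, (forall t, t \in T -> P (T :\ t)) -> P T) -> forall T, P T.
Proof.
move=> IH T; elim: {T}_.+1 {-2}T (ltnSn #|T|) => // n IHn T leT.
apply: IH => t tT; apply: IHn; move: leT; rewrite (cardsD1 t T) tT; lia.
Qed.

Lemma subset_setD1 (I : finType) (t : I) (T w : {set I}) :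
  t \in T -> (T \subset w) = (T :\ t \subset w) && (t \in w).
Proof. by move=> tT; rewrite -{1}(setD1K tT) subUset sub1set andbC. Qed.

Section Conflicts.
Variables (disp : Order.disp_t) (V : orderType disp) (Rel : eqType).
Variables (I : finType) (tup : I -> dbtuple V Rel) (IC : seq (denial V Rel)).
Local Notation W := {set I}.
Local Notation hyperedge := (hyperedge tup IC).
Local Notation violates := (violates tup IC).

Lemma violates_subset (w w' : W) : w \subset w' -> violates w -> violates w'.
Proof.
move=> /subsetP sww'; apply: ExIn_mono => dc [s [matched phi]].
by exists s; split=> //; apply: AllIn_mono matched => A [i iw ti]; exists i => //; apply: sww'.
Qed.

Lemma hyperedge_violates (e w : W) : hyperedge e -> e \subset w -> violates w.
Proof. by case=> He _; apply: He. Qed.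

Lemma violates_hyperedge (w : W) :
  violates w -> exists2 e, hyperedge e & e \subset w.
Proof.
move=> vw; pose P := fun S : W => `[< all_supersets_violate tup IC S >].
have Pw : P w by apply/asboolP => w' /violates_subset; apply.
have [e /minsetP [/asboolP He emin] sew] := minset_exists Pw.
exists e => //; split=> [//|S' ltS HS].
have eS := emin S' (asboolT HS) (proper_sub ltS).
by rewrite eS properxx in ltS.
Qed.

(* A hyperedge of the glued world lies either inside C, hence in w2, or
   outside C, hence in w1. *)
Lemma splice_consistent (C w1 w2 : W) :
  (forall e x, hyperedge e -> x \in e -> x \in C -> e \subset C) ->
  ~ violates w1 -> ~ violates w2 -> ~ violates ((w1 :\: C) :|: (w2 :&: C)).
Proof.
move=> closedC v1 v2 /violates_hyperedge [e he se].
have [x /andP [xe xC]|eCF] := pickP (fun x => (x \in e) && (x \in C)).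
  apply/v2/(hyperedge_violates he)/subsetP => y ye.
  by have := subsetP se y ye; rewrite !inE (subsetP (closedC e x he xe xC) y ye) andbT.
apply/v1/(hyperedge_violates he)/subsetP => y ye.
by have := subsetP se y ye; have := eCF y; rewrite ye !inE => /= ->; rewrite andbF orbF.
Qed.

End Conflicts.

Section Exchange.
Variables (I : finType) (R : realType).
Local Open Scope ring_scope.
Local Notation W := {set I}.

Definition prob (Pr : W -> R) (E : pred W) : R := \sum_(w | E w) Pr w.

Lemma probE (Pr : W -> R) (E : pred W) : prob Pr E = \sum_w Pr w * (E w)%:R.
Proof. by rewrite /prob big_mkcond; apply: eq_bigr => w _; case: (E w); rewrite ?mulr1 ?mulr0. Qed.

Lemma prob_andb_ge (Pr : W -> R) (E F : pred W) :
  (forall w, 0 <= Pr w) -> \sum_w Pr w = 1 ->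
  prob Pr E + prob Pr F - 1 <= prob Pr (fun w => E w && F w).
Proof.
move=> Pr_ge0 <-; rewrite !probE -subr_ge0 -big_split /= -!sumrB.
by apply: sumr_ge0 => w _; have := Pr_ge0 w; case: (E w); case: (F w) => /= ?; lra.
Qed.

Lemma sum_eq_pick (s : W) (g : W -> R) : \sum_w (s == w)%:R * g w = g s.
Proof.
by rewrite (bigD1 s) //= eqxx mul1r big1 ?addr0 // => w ws; rewrite eq_sym (negbTE ws) mul0r.
Qed.

(* The multiplicity condition is what keeps the tuple marginals unchanged when
   mass is moved from (w1, w2) to (s1 w1 w2, s2 w1 w2). *)
Definition exchange (bad : W -> Prop) (E F : pred W) (s1 s2 : W -> W -> W) :=
  forall w1 w2, E w1 && F w1 -> ~~ E w2 && ~~ F w2 ->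
  [/\ E (s1 w1 w2) && ~~ F (s1 w1 w2), ~~ E (s2 w1 w2) && F (s2 w1 w2),
      forall i, ((i \in s1 w1 w2) + (i \in s2 w1 w2) = (i \in w1) + (i \in w2))%N &
      ~ bad w1 -> ~ bad w2 -> ~ bad (s1 w1 w2) /\ ~ bad (s2 w1 w2)].

Variables (bad : W -> Prop) (E F : pred W) (s1 s2 : W -> W -> W) (Pr : W -> R).
Hypotheses (Pr_ge0 : forall w, 0 <= Pr w) (Pr_sum1 : \sum_w Pr w = 1).
Hypotheses (Pr_bad : forall w, bad w -> Pr w = 0) (s12 : exchange bad E F s1 s2).

Let both w := E w && F w.
Let neither w := ~~ E w && ~~ F w.
Let a := \sum_w Pr w * (both w)%:R.
Let b := \sum_w Pr w * (neither w)%:R.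
Let m : R := Num.min a b.
Let c : R := m / (a * b).
Let K w1 w2 := Pr w1 * (both w1)%:R * (Pr w2 * (neither w2)%:R).

(* Each pair (w1, w2) hands the mass c * K w1 w2 over to (s1 w1 w2, s2 w1 w2);
   in total c * a * b = min a b is moved out of [both] and out of [neither]
   (if a * b = 0 then c = 0 by the convention x / 0 = 0, and min a b = 0). *)
Let Pr' w := Pr w - c * (b * (Pr w * (both w)%:R) + a * (Pr w * (neither w)%:R))
  + c * \sum_w1 \sum_w2 K w1 w2 * ((s1 w1 w2 == w)%:R + (s2 w1 w2 == w)%:R).

Let a_ge0 : 0 <= a. Proof. by apply: sumr_ge0 => w _; apply: mulr_ge0. Qed.
Let b_ge0 : 0 <= b. Proof. by apply: sumr_ge0 => w _; apply: mulr_ge0. Qed.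

Let c_ge0 : 0 <= c.
Proof. by apply: divr_ge0; [rewrite le_min a_ge0 b_ge0|apply: mulr_ge0]. Qed.

Let c_mul_ab : c * (a * b) = m.
Proof.
have [ab0|ab_neq0] := eqVneq (a * b) 0; last by rewrite /c divfK.
rewrite ab0 mulr0 /m; have := a_ge0; have := b_ge0.
by move: ab0 => /eqP; rewrite mulf_eq0 => /orP [] /eqP ->; [rewrite min_l|rewrite min_r].
Qed.

Let c_mul_le1 : c * a <= 1 /\ c * b <= 1.
Proof.
have ha := a_ge0; have hb := b_ge0; have hc := c_ge0; have cab := c_mul_ab.
have [ma mb] : m <= a /\ m <= b by rewrite /m !ge_min !lexx orbT.
have [a0|a_neq0] := eqVneq a 0.
  by rewrite /c a0 !(mulr0, mul0r, invr0) ler01.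
have [b0|b_neq0] := eqVneq b 0.
  by rewrite /c b0 !(mulr0, mul0r, invr0) ler01.
have a_gt0 : 0 < a by rewrite lt_def a_neq0 ha.
have b_gt0 : 0 < b by rewrite lt_def b_neq0 hb.
by split; nra.
Qed.

Let Pr'_ge0 w : 0 <= Pr' w.
Proof.
apply: addr_ge0; last first.
  apply/mulr_ge0/sumr_ge0 => // w1 _; apply: sumr_ge0 => w2 _.
  by apply: mulr_ge0; rewrite ?addr_ge0 // !mulr_ge0.
have [ca cb] := c_mul_le1; have := Pr_ge0 w; have := c_ge0.
by rewrite /both /neither; case: (E w); case: (F w) => /=; rewrite ?mulr1 ?mulr0 ?addr0 ?add0r; nra.
Qed.

Let Pr'_expect (g : W -> R) :
  \sum_w Pr' w * g w = \sum_w Pr w * g w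
    - c * \sum_w1 \sum_w2 K w1 w2 * (g w1 + g w2 - g (s1 w1 w2) - g (s2 w1 w2)).
Proof.
have out1 : \sum_w b * (Pr w * (both w)%:R) * g w = \sum_w1 \sum_w2 K w1 w2 * g w1.
  apply: eq_bigr => w1 _; rewrite /b !mulr_suml; apply: eq_bigr => w2 _; rewrite /K; ring.
have out2 : \sum_w a * (Pr w * (neither w)%:R) * g w = \sum_w1 \sum_w2 K w1 w2 * g w2.
  rewrite exchange_big; apply: eq_bigr => w2 _; rewrite /a !mulr_suml.
  by apply: eq_bigr => w1 _; rewrite /K; ring.
have into : \sum_w (\sum_w1 \sum_w2 K w1 w2 * ((s1 w1 w2 == w)%:R + (s2 w1 w2 == w)%:R)) * g w
    = \sum_w1 \sum_w2 K w1 w2 * (g (s1 w1 w2) + g (s2 w1 w2)).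
  under eq_bigr do rewrite mulr_suml.
  rewrite exchange_big; apply: eq_bigr => w1 _.
  under eq_bigr do rewrite mulr_suml.
  rewrite exchange_big; apply: eq_bigr => w2 _.
  under eq_bigr do rewrite -mulrA mulrDl.
  by rewrite -mulr_sumr big_split /= !sum_eq_pick.
rewrite (eq_bigr (fun w => Pr w * g w - c * (b * (Pr w * (both w)%:R) * g w
   + a * (Pr w * (neither w)%:R) * g w) + c * ((\sum_w1 \sum_w2 K w1 w2 *
   ((s1 w1 w2 == w)%:R + (s2 w1 w2 == w)%:R)) * g w))); last by move=> w _; rewrite /Pr'; ring.
rewrite big_split /= big_split /= sumrN -!mulr_sumr big_split /= out1 out2 into.
have -> : \sum_w1 \sum_w2 K w1 w2 * (g w1 + g w2 - g (s1 w1 w2) - g (s2 w1 w2)) =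
    \sum_w1 \sum_w2 K w1 w2 * g w1 + \sum_w1 \sum_w2 K w1 w2 * g w2
    - \sum_w1 \sum_w2 K w1 w2 * (g (s1 w1 w2) + g (s2 w1 w2)).
  rewrite -big_split -sumrB; apply: eq_bigr => w1 _.
  by rewrite -big_split -sumrB; apply: eq_bigr => w2 _ /=; ring.
ring.
Qed.

Let K_support w1 w2 : K w1 w2 = 0 \/
  [/\ both w1, neither w2, ~ bad w1 & ~ bad w2].
Proof.
rewrite /K; case: (boolP (both w1)) => [bw1|_]; last by left; rewrite mulr0 mul0r.
case: (boolP (neither w2)) => [nw2|_]; last by left; rewrite !mulr0.
have [b1|nb1] := pselect (bad w1); first by left; rewrite Pr_bad // !mul0r.
have [b2|nb2] := pselect (bad w2); first by left; rewrite (Pr_bad b2) mul0r mulr0.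
by right.
Qed.

Let Pr'_sum1 : \sum_w Pr' w = 1.
Proof.
rewrite -Pr_sum1 -(eq_bigr _ (fun w _ => mulr1 (Pr' w))) Pr'_expect.
rewrite [X in _ - c * X]big1 ?mulr0 ?subr0; last first.
  by move=> w1 _; rewrite big1 // => w2 _; rewrite addrK subrr mulr0.
by apply: eq_bigr => w _; rewrite mulr1.
Qed.

Let Pr'_marginal i : prob Pr' (fun w => i \in w) = prob Pr (fun w => i \in w).
Proof.
rewrite !probE Pr'_expect [X in c * X]big1 ?mulr0 ?subr0 // => w1 _.
apply: big1 => w2 _; have [->|[bw1 nw2 _ _]] := K_support w1 w2; first by rewrite mul0r.
have [_ _ /(_ i) /(congr1 (fun n : nat => n%:R : R)) + _] := s12 bw1 nw2.
by rewrite !natrD => same; rewrite -addrA -opprD same subrr mulr0.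
Qed.

Let Pr'_bad w : bad w -> Pr' w = 0.
Proof.
move=> bw; rewrite /Pr' Pr_bad // !mul0r !mulr0 addr0 mulr0 subrr add0r.
apply/eqP; rewrite mulf_eq0; apply/orP; right; apply/eqP.
apply: big1 => w1 _; apply: big1 => w2 _.
have [->|[bw1 nw2 nb1 nb2]] := K_support w1 w2; first by rewrite mul0r.
have [_ _ _ /(_ nb1 nb2) [nb1' nb2']] := s12 bw1 nw2.
have -> : (s1 w1 w2 == w) = false by apply/negP => /eqP e; apply: nb1'; rewrite e.
have -> : (s2 w1 w2 == w) = false by apply/negP => /eqP e; apply: nb2'; rewrite e.
by rewrite addr0 mulr0.
Qed.

Let Pr'_both : prob Pr' both = a - m.
Proof.
rewrite probE Pr'_expect -c_mul_ab; congr (_ - c * _).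
rewrite /a /b mulr_suml; apply: eq_bigr => w1 _; rewrite mulr_sumr; apply: eq_bigr => w2 _.
rewrite -[RHS]/(K w1 w2); have [->|[bw1 nw2 _ _]] := K_support w1 w2; first by rewrite mul0r.
have [/andP [_ nF1] /andP [nE2 _] _ _] := s12 bw1 nw2.
move: nw2 => /andP [/negbTE nE2' _].
by rewrite bw1 /both (negbTE nF1) nE2' andbF (negbTE nE2) /= !subr0 addr0 mulr1.
Qed.

Let prob_sum_sub1 : prob Pr E + prob Pr F - 1 = a - b.
Proof.
rewrite -Pr_sum1 !probE -big_split /= /a /b -!sumrB; apply: eq_bigr => w _.
by rewrite /both /neither; case: (E w); case: (F w) => /=; ring.
Qed.

Lemma exchange_distribution : exists Pr' : W -> R,
  [/\ forall w, 0 <= Pr' w, \sum_w Pr' w = 1,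
      forall i, prob Pr' (fun w => i \in w) = prob Pr (fun w => i \in w),
      forall w, bad w -> Pr' w = 0 &
      prob Pr' (fun w => E w && F w) = Num.max 0 (prob Pr E + prob Pr F - 1)].
Proof.
exists Pr'; split=> //; rewrite prob_sum_sub1 Pr'_both /m.
by case: (leP a b) => ab; [rewrite subrr max_l // subr_le0|rewrite max_r // subr_ge0 ltW].
Qed.

End Exchange.

Section Frechet.
Variables (disp : Order.disp_t) (V : orderType disp) (Rel : eqType).
Variables (I : finType) (tup : I -> dbtuple V Rel) (IC : seq (denial V Rel)).
Variables (R : realType) (p : I -> R).
Local Notation W := {set I}.
Local Open Scope ring_scope.

Definition frechet_sum (T : W) : R := \sum_(u in T) p u - #|T|%:R + 1.

Lemma frechet_sum0 : frechet_sum set0 = 1.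
Proof. by rewrite /frechet_sum big_set0 cards0 subrr add0r. Qed.

Lemma frechet_sumD1 (t : I) (T : W) :
  t \in T -> frechet_sum T = frechet_sum (T :\ t) + p t - 1.
Proof. by move=> tT; rewrite /frechet_sum (big_setD1 t) // (cardsD1 t T) tT natrD /=; ring. Qed.

Lemma frechet_boundE (T : W) : frechet_bound p T = Num.max 0 (frechet_sum T).
Proof. by []. Qed.

Lemma prob_allE (Pr : W -> R) (T : W) : prob_all Pr T = prob Pr (fun w => T \subset w).
Proof. by []. Qed.

Lemma prob_all_set0 (Pr : W -> R) : interpretation p Pr -> prob_all Pr set0 = 1.
Proof. by case=> _ <- _; apply: eq_bigl => w; rewrite sub0set. Qed.

Lemma frechet_sum_le_prob_all (Pr : W -> R) (T : W) :
  interpretation p Pr -> frechet_sum T <= prob_all Pr T.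
Proof.
move=> PrI; have [Pr_ge0 Pr_sum1 Pr_marg] := PrI; elim/setD1_ind: T => T IH.
have [->|[t tT]] := set_0Vmem T; first by rewrite frechet_sum0 prob_all_set0.
have bonf := prob_andb_ge (fun w => T :\ t \subset w) (fun w => t \in w) Pr_ge0 Pr_sum1.
have marg : prob Pr (fun w => t \in w) = p t := Pr_marg t.
have conj : prob Pr (fun w => (T :\ t \subset w) && (t \in w)) = prob_all Pr T.
  by apply: eq_bigl => w; rewrite (subset_setD1 w tT).
have IHt : frechet_sum (T :\ t) <= prob Pr (fun w => T :\ t \subset w) := IH t tT.
by rewrite marg conj in bonf; rewrite (frechet_sumD1 tT); lra.
Qed.

Lemma frechet_bound_le_prob_all (Pr : W -> R) (T : W) :
  interpretation p Pr -> frechet_bound p T <= prob_all Pr T.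
Proof.
move=> PrI; rewrite frechet_boundE ge_max frechet_sum_le_prob_all // andbT.
by apply: sumr_ge0 => w _; case: PrI.
Qed.

Definition peelable (T : W) (t : I) : Prop :=
  exists s1 s2, exchange (violates tup IC) (fun w => T :\ t \subset w) (fun w => t \in w) s1 s2.

Lemma max0_addr_sub1 (x y : R) :
  y <= 1 -> Num.max 0 (Num.max 0 x + y - 1) = Num.max 0 (x + y - 1).
Proof. by move=> y1; case: (leP 0 x) => // x0; rewrite !max_l //; lra. Qed.

Lemma frechet_bound_attained (T : W) :
  pdb_consistent tup p IC -> (forall i, p i <= 1) ->
  (forall T' : W, T' \subset T -> T' != set0 -> exists2 t, t \in T' & peelable T' t) ->
  exists2 Pr, model tup p IC Pr & prob_all Pr T = frechet_bound p T.
Proof.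
move=> [Pr0 Pr0M] p_le1; elim/setD1_ind: T => T IH peelT.
have [->|T_neq0] := eqVneq T set0.
  exists Pr0 => //; rewrite frechet_boundE frechet_sum0 max_r ?ler01 //.
  by apply: prob_all_set0; case: Pr0M.
have [t tT [s1 [s2 s12]]] := peelT T (subxx T) T_neq0.
have [Pr1 [[Pr1_ge0 Pr1_sum1 Pr1_marg] Pr1_bad] Pr1T] :=
  IH t tT (fun T' sT' => peelT T' (subset_trans sT' (subD1set T t))).
have [Pr [Pr_ge0 Pr_sum1 Pr_marg Pr_bad PrT]] :=
  exchange_distribution Pr1_ge0 Pr1_sum1 Pr1_bad s12.
exists Pr; first by split=> //; split=> // i; rewrite -Pr1_marg; apply: Pr_marg.
have -> : prob_all Pr T = prob Pr (fun w => (T :\ t \subset w) && (t \in w)).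
  by apply: eq_bigl => w; rewrite (subset_setD1 w tT).
have marg : prob Pr1 (fun w => t \in w) = p t := Pr1_marg t.
rewrite PrT -prob_allE Pr1T marg !frechet_boundE (frechet_sumD1 tT).
exact: max0_addr_sub1.
Qed.

End Frechet.

Section Components.
Variables (disp : Order.disp_t) (V : orderType disp) (Rel : eqType).
Variables (I : finType) (tup : I -> dbtuple V Rel) (IC : seq (denial V Rel)).
Local Notation W := {set I}.
Local Notation hyperedge := (hyperedge tup IC).

Definition hg_walk (t v : I) : Prop := exists (e1 : W) (es : seq W),
  [/\ AllIn hyperedge (e1 :: es), path (fun A B : W => ~~ [disjoint A & B]) e1 es,
      t \in e1 & v \in last e1 es].

Lemma hg_walk_connected (t v : I) : hg_walk t v -> hg_connected tup IC t v.
Proof.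
move=> [e1 [es [hyp walk te1]]]; case: (shortenP walk) => es' walk' uniq' sub' vlast.
exists e1, es'; split=> //; move/AllInP: hyp => hyp; apply/AllInP => e.
by rewrite in_cons => /orP [/eqP ->|/sub' ees]; apply: hyp; rewrite in_cons ?eqxx ?ees ?orbT.
Qed.

Lemma hg_walk_extend (t x v : I) (e : W) : hyperedge e -> x \in e -> v \in e ->
  x = t \/ hg_walk t x -> hg_walk t v.
Proof.
move=> he xe ve [<-|[e1 [es [hyp walk te1 xlast]]]]; first by exists e, [::].
exists e1, (rcons es e); split; last by rewrite last_rcons.
- move/AllInP: hyp => hyp; apply/AllInP => y; rewrite -rcons_cons mem_rcons in_cons.
  by case/orP => [/eqP ->|]; last exact: hyp.
- by rewrite rcons_path walk /=; apply/negP => /disjointFr /(_ xlast); rewrite xe.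
- done.
Qed.

Definition hg_component (t : I) : W := t |: [set v | `[< hg_walk t v >]].

Lemma hg_component_closed (t x : I) (e : W) :
  hyperedge e -> x \in e -> x \in hg_component t -> e \subset hg_component t.
Proof.
move=> he xe xC; apply/subsetP => v ve; rewrite !inE; apply/orP; right; apply/asboolP.
by apply: (hg_walk_extend he xe ve); move: xC; rewrite !inE => /orP [/eqP|/asboolP]; [left|right].
Qed.

(* Exchange the parts of w1 and w2 lying in the component of t: this moves t
   and keeps the other tuples of T, which lie outside that component. *)
Lemma disconnected_peelable (T T' : W) (t : I) : pairwise_disconnected tup IC T ->
  T' \subset T -> t \in T' -> peelable tup IC T' t.
Proof.
move=> discT sT'T tT'; set C := hg_component t.
have tC : t \in C by rewrite !inE eqxx.
have T'C u : u \in T' :\ t -> u \notin C.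
  rewrite in_setD1 => /andP [ut uT']; rewrite !inE (negbTE ut) /=.
  apply/negP => /asboolP /hg_walk_connected; apply: discT; rewrite ?(subsetP sT'T) //.
  by rewrite eq_sym.
exists (fun w1 w2 => (w1 :\: C) :|: (w2 :&: C)), (fun w1 w2 => (w2 :\: C) :|: (w1 :&: C)).
move=> w1 w2 /andP [E1 F1] /andP [E2 F2]; split.
- rewrite in_setU in_setD in_setI tC (negbTE F2) /= andbT.
  by apply/subsetP => u uT'; rewrite in_setU in_setD (T'C u uT') (subsetP E1).
- rewrite in_setU in_setI tC F1 orbT andbT; apply: contra E2 => /subsetP E2.
  apply/subsetP => u uT'; have := E2 u uT'.
  by rewrite in_setU in_setD in_setI (negbTE (T'C u uT')) andbF orbF.
- move=> i; rewrite !in_setU !in_setD !in_setI.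
  by case: (i \in C); case: (i \in w1); case: (i \in w2).
- by move=> v1 v2; split; apply: splice_consistent => // e x; apply: hg_component_closed.
Qed.

End Components.

Section NestedTraces.
Variables (disp : Order.disp_t) (V : orderType disp) (Rel : eqType).
Variables (I : finType) (tup : I -> dbtuple V Rel) (IC : seq (denial V Rel)).
Local Notation W := {set I}.
Local Notation hyperedge := (hyperedge tup IC).

Definition nested_traces (T : W) : Prop := forall e e', hyperedge e -> hyperedge e' ->
  T :&: e \subset T :&: e' \/ T :&: e' \subset T :&: e.

Lemma matryoshka_nested_traces (T : W) :
  matryoshka (in_Int tup IC T) -> nested_traces T.
Proof.
move=> nest e e' he he'.
have [->|/proper_sub ?|/proper_sub ?] := nest _ _ (ex_intro2 _ _ e he erefl)
  (ex_intro2 _ _ e' he' erefl); by [left|left|right].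
Qed.

Lemma nested_tracesS (T0 T : W) : T0 \subset T -> nested_traces T -> nested_traces T0.
Proof.
move=> sT0T nestT e e' he he'; rewrite -(setIidPl sT0T) -!setIA.
by case: (nestT e e' he he') => sub; [left|right]; apply: setIS.
Qed.

(* A tuple of T outside the largest proper trace of T lies in no proper trace. *)
Lemma nested_traces_pivot (T : W) : nested_traces T -> T != set0 ->
  exists2 t, t \in T & forall e, hyperedge e -> t \in e -> T \subset e.
Proof.
move=> nestT /set0Pn [t0 t0T].
pose P e := `[< hyperedge e >] && ~~ (T \subset e).
have [e0 Pe0|noP] := pickP P; last first.
  exists t0 => // e he _; apply: contraT => nTe.
  by have := noP e; rewrite /P (asboolT he) nTe.
case: (arg_maxnP (fun e => #|T :&: e|) Pe0) => e /andP [/asboolP he nTe] emax.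
have [t tT te] := subsetPn nTe; exists t => // e' he' te'; apply: contraT => nTe'.
have lt_ee' : #|T :&: e| < #|T :&: e'|.
  case: (nestT e e' he he') => sub; last first.
    by have := subsetP sub t; rewrite !inE tT te' (negbTE te) => /(_ isT).
  apply: proper_card; rewrite properE sub; apply/subsetPn.
  by exists t; rewrite !inE ?tT ?te' ?(negbTE te).
by have /= := emax e'; rewrite /P (asboolT he') nTe' leqNgt lt_ee' => /(_ isT).
Qed.

Lemma pivot_peelable (T : W) (t : I) :
  (forall e, hyperedge e -> t \in e -> T \subset e) -> peelable tup IC T t.
Proof.
move=> pivot; exists (fun w1 w2 => w1 :\ t), (fun w1 w2 => t |: w2).
move=> w1 w2 /andP [E1 F1] /andP [E2 F2]; split.
- by rewrite subsetD1 E1 !in_setD1 eqxx.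
- rewrite !inE eqxx andbT; apply: contra E2 => /subsetP E2; apply/subsetP => u uT.
  by have := E2 u uT; move: uT; rewrite !inE => /andP [/negbTE -> _].
- by move=> i; rewrite !inE; case: eqP => [->|_]; rewrite ?F1 ?(negbTE F2).
move=> v1 v2; split; first by apply: contra_not v1; apply: violates_subset; apply: subD1set.
move=> /violates_hyperedge [e he se]; have [te|te] := boolP (t \in e).
  move/negP: E2; apply; apply/subsetP => u; rewrite in_setD1 => /andP [ut uT].
  by have := subsetP se u (subsetP (pivot e he te) u uT); rewrite in_setU1 (negbTE ut).
apply/v2/(hyperedge_violates he)/subsetP => x xe.
by have := subsetP se x xe; rewrite in_setU1 => /orP [/eqP xt|//]; rewrite -xt xe in te.
Qed.

End NestedTraces.

Local Open Scope ring_scope.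

Theorem lemma1
  (disp : Order.disp_t) (V : orderType disp) (Rel : eqType) (ar : Rel -> nat)
  (I : finType) (tup : I -> dbtuple V Rel) (R : realType) (p : I -> R)
  (IC : seq (denial V Rel))
  (tup_inj : injective tup)
  (tup_wf : forall i, wf_tuple ar (tup i))
  (p_range : forall i, 0 <= p i <= 1)
  (IC_wf : AllIn (wf_denial ar) IC)
  (Hcons : pdb_consistent tup p IC)
  (T : {set I}) :
  (pairwise_disconnected tup IC T \/ matryoshka (in_Int tup IC T) ->
     is_pmin tup p IC T (frechet_bound p T)) /\
  (~ (pairwise_disconnected tup IC T \/ matryoshka (in_Int tup IC T)) ->
     pmin_lower_bound tup p IC T (frechet_bound p T)).
Proof.
have lower : pmin_lower_bound tup p IC T (frechet_bound p T).
  by move=> Pr [PrI _]; apply: frechet_bound_le_prob_all.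
split=> [special|_ //]; split=> //.
have p_le1 i : p i <= 1 by case/andP: (p_range i).
apply: frechet_bound_attained => // T' sT'T T'_neq0.
case: special => [discT|/matryoshka_nested_traces nestT].
- have [t tT'] := set0Pn _ T'_neq0.
  by exists t => //; apply: disconnected_peelable discT sT'T tT'.
- have [t tT' pivot] := nested_traces_pivot (nested_tracesS sT'T nestT) T'_neq0.
  by exists t => //; apply: pivot_peelable.
Qed.
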